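(* Let $\mathcal{X}_1,\mathcal{X}_2$ be non-empty sets, $\mathcal{B}_1\subseteq\mathcal{P}(\mathcal{X}_1)\setminus\{\emptyset\}$, $\mathcal{B}_2\subseteq\mathcal{P}(\mathcal{X}_2)\setminus\{\emptyset\}$, and for $i\in\{1,2\}$ let $\underline{P}_i$ be a coherent conditional lower prevision on $\mathcal{C}_i\subseteq\mathcal{C}(\mathcal{X}_i)$ with natural extension $\underline{E}_i$ to $\mathcal{C}(\mathcal{X}_i)$, and let $\overline{E}_i(g):=-\underline{E}_i(-g)$. Let $\{i,j\}=\{1,2\}$. Then for any $h\in\mathcal{G}(\mathcal{X}_j)$ and any $\mathcal{B}_i$-measurable $g\in\mathcal{G}_{\geq0}(\mathcal{X}_i)$, $$(\underline{P}_1\otimes\underline{P}_2)(gh)=\underline{E}_i\big(g\,\underline{E}_j(h)\big)=\begin{cases}\underline{E}_i(g)\underline{E}_j(h)&\text{if }\underline{E}_j(h)\geq0,\\ \overline{E}_i(g)\underline{E}_j(h)&\text{if }\underline{E}_j(h)\leq0.\end{cases}$$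
   Context: Gambles on a non-empty set $\mathcal{X}$ are bounded real functions; $\mathcal{G}(\mathcal{X})$, $\mathcal{G}_{\geq0}(\mathcal{X})$, $\mathcal{G}_{>0}(\mathcal{X})$ denote all gambles, non-negative gambles, non-negative non-zero gambles. For $\mathcal{A}\subseteq\mathcal{G}(\mathcal{X})$: $\mathrm{posi}(\mathcal{A}):=\{\sum_{i=1}^n\lambda_if_i\colon n\in\mathbb{N},\lambda_i>0,f_i\in\mathcal{A}\}$, $\mathcal{E}(\mathcal{A}):=\mathrm{posi}(\mathcal{A}\cup\mathcal{G}_{>0}(\mathcal{X}))$. A coherent set of desirable gambles $\mathcal{D}\subseteq\mathcal{G}(\mathcal{X})$ satisfies: (D1) $f\geq0,f\neq0\Rightarrow f\in\mathcal{D}$; (D2) $f\in\mathcal{D},\lambda>0\Rightarrow\lambda f\in\mathcal{D}$; (D3) $f,g\in\mathcal{D}\Rightarrow f+g\in\mathcal{D}$; (D4) $f\leq0\Rightarrow f\notin\mathcal{D}$. $\mathcal{C}(\mathcal{X}):=\mathcal{G}(\mathcal{X})\times(\mathcal{P}(\mathcal{X})\setminus\{\emptyset\})$; a conditional lower prevision on $\mathcal{C}\subseteq\mathcal{C}(\mathcal{X})$ is a map $(f,B)\mapsto\underline{P}(f\vert B)\in\mathbb{R}\cup\{\pm\infty\}$. For $\mathcal{D}\subseteq\mathcal{G}(\mathcal{X})$, $\underline{P}_{\mathcal{D}}(f\vert B):=\sup\{\mu\in\mathbb{R}\colon[f-\mu]\mathbb{I}_B\in\mathcal{D}\}$. $\underline{P}$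 is coherent if $\underline{P}=\underline{P}_{\mathcal{D}}$ on its domain for some coherent set of desirable gambles $\mathcal{D}$. For coherent $\underline{P}$ on $\mathcal{C}$, $\mathcal{E}(\underline{P}):=\mathcal{E}(\{[f-\mu]\mathbb{I}_B\colon(f,B)\in\mathcal{C},\mu<\underline{P}(f\vert B)\})$ and its natural extension is $\underline{E}(f\vert B):=\underline{P}_{\mathcal{E}(\underline{P})}(f\vert B)$ for all $(f,B)\in\mathcal{C}(\mathcal{X})$. Unconditional notation: $\underline{P}(f):=\underline{P}(f\vert\mathcal{X})$. Gambles on $\mathcal{X}_i$ are identified with their cylindrical extensions to $\mathcal{X}_1\times\mathcal{X}_2$, events $B\subseteq\mathcal{X}_1$ with $B\times\mathcal{X}_2$ (similarly for $\mathcal{X}_2$). For coherent sets of desirable gambles $\mathcal{D}_1,\mathcal{D}_2$: $\mathcal{D}_1\otimes\mathcal{D}_2:=\mathcal{E}(\mathcal{A}_{1\to2}\cup\mathcal{A}_{2\to1})$, $\mathcal{A}_{1\to2}:=\{f_2(X_2)\mathbb{I}_{B_1}(X_1)\colon f_2\in\mathcal{D}_2,B_1\in\mathcal{B}_1\cup\{\mathcal{X}_1\}\}$, $\mathcal{A}_{2\to1}:=\{f_1(X_1)\mathbb{I}_{B_2}(X_2)\colon f_1\in\mathcal{D}_1,B_2\in\mathcal{B}_2\cup\{\mathcal{X}_2\}\}$. Then $(\underline{P}_1\otimes\underline{P}_2)(f\vert B):=\underline{P}_{\mathcal{D}}(f\vert B)$ for $(f,B)\in\mathcal{C}(\mathcal{X}_1\times\mathcal{X}_2)$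 with $\mathcal{D}=\mathcal{E}(\underline{P}_1)\otimes\mathcal{E}(\underline{P}_2)$. Measurability: for $\mathcal{B}\subseteq\mathcal{P}(\mathcal{X})\setminus\{\emptyset\}$, $g\in\mathcal{G}_{\geq0}(\mathcal{X})$ is simple $\mathcal{B}$-measurable if $g=c_0+\sum_{k=1}^nc_k\mathbb{I}_{B_k}$ for some $n\in\mathbb{N}\cup\{0\}$, $c_0,\dots,c_n\geq0$, $B_k\in\mathcal{B}$; $g\in\mathcal{G}_{\geq0}(\mathcal{X})$ is $\mathcal{B}$-measurable if there is a sequence of simple $\mathcal{B}$-measurable $g_n\in\mathcal{G}_{\geq0}(\mathcal{X})$ with $\sup|g-g_n|\to0$. *)

From HB Require Import structures.
From mathcomp Require Import all_boot all_order all_algebra.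
From mathcomp Require Import all_classical all_reals all_analysis.
Set Implicit Arguments. Unset Strict Implicit. Unset Printing Implicit Defensive.
Import Order.TTheory GRing.Theory Num.Theory.
Local Open Scope classical_set_scope.
Local Open Scope ring_scope.

Section Gambles.
Variable R : realType.

Definition gamble (X : Type) (f : X -> R) : Prop :=
  exists M : R, forall x, `|f x| <= M.

Definition G_ge0 (X : Type) : set (X -> R) :=
  [set f | gamble f /\ (forall x, 0 <= f x)].

Definition G_gt0 (X : Type) : set (X -> R) :=
  [set f | gamble f /\ (forall x, 0 <= f x) /\ exists x, f x != 0].

Definition posi (X : Type) (A : set (X -> R)) : set (X -> R) :=
  [set f | exists (n : nat) (lam : 'I_n -> R) (fs : 'I_n -> X -> R),
     (0 < n)%N /\ (forall k, 0 < lam k) /\ (forall k, A (fs k)) /\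
     f = (fun x => \sum_(k < n) lam k * fs k x)].

Definition Eext (X : Type) (A : set (X -> R)) : set (X -> R) :=
  posi (A `|` @G_gt0 X).

Definition coherent_D (X : Type) (D : set (X -> R)) : Prop :=
  (forall f, D f -> gamble f) /\
  (forall f, G_gt0 f -> D f) /\
  (forall f (lam : R), D f -> 0 < lam -> D (fun x => lam * f x)) /\
  (forall f g, D f -> D g -> D (fun x => f x + g x)) /\
  (forall f, (forall x, f x <= 0) -> ~ D f).

Definition CX (X : Type) : set ((X -> R) * set X) :=
  [set p | gamble p.1 /\ p.2 != set0].

Definition cond_gamble (X : Type) (f : X -> R) (B : set X) (mu : R) : X -> R :=
  fun x => (f x - mu) * \1_B x.

(* P_D(f | B) := sup { mu in R : [f - mu] I_B in D }  (sup of empty set = -oo) *)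
Definition P_of (X : Type) (D : set (X -> R)) (f : X -> R) (B : set X) : \bar R :=
  ereal_sup [set (mu%:E) | mu in [set mu : R | D (cond_gamble f B mu)]].

Definition coherent_P (X : Type) (C : set ((X -> R) * set X))
    (P : (X -> R) -> set X -> \bar R) : Prop :=
  C `<=` @CX X /\
  exists D : set (X -> R), coherent_D D /\
    forall f B, C (f, B) -> P f B = P_of D f B.

Definition E_of_P (X : Type) (C : set ((X -> R) * set X))
    (P : (X -> R) -> set X -> \bar R) : set (X -> R) :=
  Eext [set g | exists f B (mu : R),
          C (f, B) /\ (mu%:E < P f B)%E /\ g = cond_gamble f B mu].

Definition nat_ext (X : Type) (C : set ((X -> R) * set X))
    (P : (X -> R) -> set X -> \bar R) (f : X -> R) (B : set X) : \bar R :=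
  P_of (E_of_P C P) f B.

Definition nat_ext_u (X : Type) (C : set ((X -> R) * set X))
    (P : (X -> R) -> set X -> \bar R) (f : X -> R) : \bar R :=
  nat_ext C P f setT.

Definition nat_ext_upper (X : Type) (C : set ((X -> R) * set X))
    (P : (X -> R) -> set X -> \bar R) (f : X -> R) : \bar R :=
  (- nat_ext_u C P (fun x => (- f x)%R))%E.

Definition D_prod (X1 X2 : Type) (B1 : set (set X1)) (B2 : set (set X2))
    (D1 : set (X1 -> R)) (D2 : set (X2 -> R)) : set (X1 * X2 -> R) :=
  Eext ([set g | exists f2 b1, D2 f2 /\ (B1 `|` [set setT]) b1 /\
                 g = (fun x => f2 x.2 * \1_b1 x.1)] `|`
        [set g | exists f1 b2, D1 f1 /\ (B2 `|` [set setT]) b2 /\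
                 g = (fun x => f1 x.1 * \1_b2 x.2)]).

Definition prod_P (X1 X2 : Type) (B1 : set (set X1)) (B2 : set (set X2))
    (C1 : set ((X1 -> R) * set X1)) (P1 : (X1 -> R) -> set X1 -> \bar R)
    (C2 : set ((X2 -> R) * set X2)) (P2 : (X2 -> R) -> set X2 -> \bar R)
    (f : X1 * X2 -> R) (B : set (X1 * X2)) : \bar R :=
  P_of (D_prod B1 B2 (E_of_P C1 P1) (E_of_P C2 P2)) f B.

Definition simple_meas (X : Type) (B : set (set X)) (g : X -> R) : Prop :=
  exists (n : nat) (c0 : R) (c : 'I_n -> R) (Bs : 'I_n -> set X),
    0 <= c0 /\ (forall k, 0 <= c k) /\ (forall k, B (Bs k)) /\
    g = (fun x => c0 + \sum_(k < n) c k * \1_(Bs k) x).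

(* sup |g - g_n| -> 0, written out as uniform convergence *)
Definition B_measurable (X : Type) (B : set (set X)) (g : X -> R) : Prop :=
  G_ge0 g /\
  exists gs : nat -> X -> R,
    (forall n, simple_meas B (gs n) /\ G_ge0 (gs n)) /\
    forall eps : R, 0 < eps -> exists N : nat, forall n, (N <= n)%N ->
      forall x, `|g x - gs n x| <= eps.

End Gambles.

(* Write [lpr D f] for the supremum of the prices [mu] with [f - mu] in a coherent cone
   [D]; natural extensions are [lpr] of [E(P)], and the whole statement reduces to
     lpr_(D1 (x) D2) (g h) = lpr_D1 (g * lpr_D2 h),
   after which the three formulas are positive homogeneity of [lpr_D1] in the constant
   [lpr_D2 h].

   Upper bound: every gamble of [D1 (x) D2] differs, on each section [x1], from a gamble
   that is desirable or non-negative for [D2] by some [\sum_j f_j x1 * 1_(b_j)] with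
   [f_j] in [D1]. A linear functional [q] on the span of [1], [h] and the [1_(b_j)] that
   dominates [lpr_D2] and takes the values [1] and [lpr_D2 h] at [1] and [h] exists by a
   finite-dimensional Hahn-Banach argument; applied to the section of [g h - mu] it
   gives [\sum_j q (1_(b_j)) f_j <= g lpr_D2 h - mu], whose left-hand side is again
   desirable or non-negative for [D1].

   Lower bound: if [mu < lpr_D1 (g lpr_D2 h)], approximate [g] uniformly by a simple
   [B1]-measurable [s] and choose [eps > 0] with [h - lpr_D2 h + eps] in [D2]; then
   [g h - mu] is explicitly a positive combination of generators of [D1 (x) D2], the
   error [(g - s) (h - lpr_D2 h + eps)] being absorbed by a strictly positive slack. *)

From HB Require Import structures.
From mathcomp Require Import all_boot all_order all_algebra.
From mathcomp Require Import all_classical all_reals all_analysis.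
From mathcomp Require Import unstable ring lra.
Import Order.TTheory GRing.Theory Num.Theory.
Local Open Scope classical_set_scope.
Local Open Scope ring_scope.
Set Implicit Arguments. Unset Strict Implicit. Unset Printing Implicit Defensive.

Section Gambles.
Variable R : realType.
Implicit Types T U : Type.

Lemma indic_ge0 T (A : set T) x : 0 <= \1_A x :> R.
Proof. by rewrite indicE; case: (x \in A). Qed.

Lemma indic_le1 T (A : set T) x : \1_A x <= 1 :> R.
Proof. by rewrite indicE; case: (x \in A); rewrite ?ler01. Qed.

Lemma gamble_cst T (k : R) : gamble (fun _ : T => k).
Proof. by exists `|k|. Qed.

Lemma gambleD T (f g : T -> R) : gamble f -> gamble g ->
  gamble (fun x => f x + g x).
Proof.
move=> [M hM] [N hN]; exists (M + N) => x.
by apply: le_trans (ler_normD _ _) _; apply: lerD.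
Qed.

Lemma gambleM T (f g : T -> R) : gamble f -> gamble g ->
  gamble (fun x => f x * g x).
Proof. by move=> [M hM] [N hN]; exists (M * N) => x; rewrite normrM ler_pM. Qed.

Lemma gambleN T (f : T -> R) : gamble f -> gamble (fun x => - f x).
Proof. by move=> [M hM]; exists M => x; rewrite normrN. Qed.

Lemma gambleB T (f g : T -> R) : gamble f -> gamble g ->
  gamble (fun x => f x - g x).
Proof. by move=> gf gg; apply: gambleD => //; apply: gambleN. Qed.

Lemma gamble_indic T (A : set T) : gamble (fun x => \1_A x : R).
Proof. by exists 1 => x; rewrite ger0_norm ?indic_le1 ?indic_ge0. Qed.

Lemma gamble_sum T n (F : nat -> T -> R) :
  (forall i, (i < n)%N -> gamble (F i)) -> gamble (fun x => \sum_(i < n) F i x).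
Proof.
elim: n => [|n IH] gF.
  by under eq_fun do rewrite big_ord0; apply: gamble_cst.
under eq_fun do rewrite big_ord_recr /=.
by apply: gambleD; [apply: IH => i /ltnW; apply: gF | apply: gF].
Qed.

Lemma gamble_comp T U (f : T -> R) (p : U -> T) : gamble f -> gamble (fun x => f (p x)).
Proof. by move=> [M hM]; exists M. Qed.

Lemma cond_gamble_setT T (f : T -> R) mu : cond_gamble f setT mu = (fun x => f x - mu).
Proof. by apply: funext => x; rewrite /cond_gamble indicE in_setT mulr1. Qed.

Lemma gamble_bound T (f : T -> R) : [set: T] !=set0 -> gamble f ->
  exists2 M, 0 <= M & forall x, `|f x| <= M.
Proof. by move=> [x _] [M hM]; exists M => //; apply: le_trans (hM x). Qed.

Lemma G_gt0_lb T (f : T -> R) k : [set: T] !=set0 -> gamble f -> 0 < k ->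
  (forall x, k <= f x) -> G_gt0 f.
Proof.
move=> [x0 _] gf k_gt0 kf; split=> //; split; first by move=> x; apply: le_trans (kf x); exact: ltW.
by exists x0; rewrite gt_eqF // (lt_le_trans k_gt0).
Qed.

Lemma ex_mul_tolerance (M d : R) : 0 <= M -> 0 < d ->
  exists2 e, 0 < e & forall y z, `|y| <= M -> `|z| <= e -> `|z * y| <= d.
Proof.
move=> M_ge0 d_gt0; exists (d / (M + 1)) => [|y z yM ze]; first by rewrite divr_gt0 // ltr_wpDl.
rewrite normrM; apply: le_trans (ler_pM (normr_ge0 _) (normr_ge0 _) ze yM) _.
rewrite mulrAC ler_pdivrMr ?ltr_wpDl //; nra.
Qed.

End Gambles.

Section Posi.
Variables (R : realType) (T : Type) (A : set (T -> R)).

Lemma posi_in f : A f -> posi A f.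
Proof.
move=> Af; exists 1%N, (fun _ => 1), (fun _ => f); do 3!split => //.
by apply: funext => x; rewrite big_ord1 mul1r.
Qed.

Lemma posiZ f lam : posi A f -> 0 < lam -> posi A (fun x => lam * f x).
Proof.
move=> [n [la [fs [n_gt0 [la_gt0 [Afs ->]]]]]] lam_gt0.
exists n, (fun k => lam * la k), fs; do 2!split=> //; first by move=> k; apply: mulr_gt0.
by split=> //; apply: funext => x; rewrite mulr_sumr; apply: eq_bigr => i _; rewrite mulrA.
Qed.

Lemma posiD f g : posi A f -> posi A g -> posi A (fun x => f x + g x).
Proof.
move=> [n [la [fs [n_gt0 [la_gt0 [Afs ->]]]]]] [m [la' [fs' [_ [la'_gt0 [Afs' ->]]]]]].
pose pick U (u : 'I_n -> U) (v : 'I_m -> U) i :=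
  match fintype.split i with inl j => u j | inr k => v k end.
exists (n + m)%N, (pick _ la la'), (pick _ fs fs'); split; first by rewrite addn_gt0 n_gt0.
split; first by move=> i; rewrite /pick; case: (fintype.split i).
split; first by move=> i; rewrite /pick; case: (fintype.split i).
apply: funext => x; rewrite big_split_ord /pick /=.
by congr (_ + _); apply: eq_bigr => i _;
  [rewrite (unsplitK (inl _ i)) | rewrite (unsplitK (inr _ i))].
Qed.

Lemma posi_min (S : set (T -> R)) :
  (forall f g, S f -> S g -> S (fun x => f x + g x)) ->
  (forall f lam, S f -> 0 < lam -> S (fun x => lam * f x)) ->
  A `<=` S -> posi A `<=` S.
Proof.
move=> SD SZ AS f [n [la [fs [n_gt0 [la_gt0 [Afs ->]]]]]].
elim: n n_gt0 la fs la_gt0 Afs => [//|[|n] IH] _ la fs la_gt0 Afs.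
  by under eq_fun do rewrite big_ord1; apply: SZ => //; apply: AS.
under eq_fun do rewrite big_ord_recr /=.
by apply: SD; [apply: IH | apply: SZ => //; apply: AS].
Qed.

Lemma posiD_ge0 f g a : posi A f -> 0 <= a -> A g -> posi A (fun x => f x + a * g x).
Proof.
move=> Af; rewrite le_eqVlt => /predU1P[<- _|a_gt0 Ag].
  by under eq_fun do rewrite mul0r addr0.
by apply: posiD => //; apply: posiZ => //; apply: posi_in.
Qed.

Lemma posiD_sum f m (a : 'I_m -> R) (G : 'I_m -> T -> R) : posi A f ->
  (forall k, 0 <= a k) -> (forall k, A (G k)) ->
  posi A (fun x => f x + \sum_(k < m) a k * G k x).
Proof.
elim: m a G => [|m IH] a G Af a_ge0 AG.
  by under eq_fun do rewrite big_ord0 addr0.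
under eq_fun do rewrite big_ord_recr /= addrA.
by apply: posiD_ge0 => //; apply: IH.
Qed.

End Posi.

Lemma ereal_sup_EFin_eq (R : realType) (S : set R) a : (forall mu, S mu -> mu <= a) ->
  (forall mu, mu < a -> S mu) -> ereal_sup [set mu%:E | mu in S] = a%:E.
Proof.
move=> S_ub S_lt; have S_neq0 : S !=set0 by exists (a - 1); apply: S_lt; rewrite gtrBl.
rewrite ereal_sup_EFin //; last by exists a.
congr EFin; apply/eqP; rewrite eq_le ge_sup //=.
by apply/ler_ltP => v va; apply: ub_le_sup; [exists a | apply: S_lt].
Qed.

Section CoherentCone.
Variables (R : realType) (X : Type).

Definition coherent_cone (D : set (X -> R)) : Prop :=
  (forall f, G_gt0 f -> D f) /\
  (forall f (lam : R), D f -> 0 < lam -> D (fun x => lam * f x)) /\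
  (forall f g, D f -> D g -> D (fun x => f x + g x)) /\
  (forall f, (forall x, f x <= 0) -> ~ D f).

Definition buying_prices (D : set (X -> R)) (f : X -> R) : set R :=
  [set mu | D (fun x => f x - mu)].

(* Only meaningful for gambles, where it is the real number [P_of D f setT]
   ([P_of_setT]); otherwise [sup] returns a junk value. *)
Definition lpr (D : set (X -> R)) (f : X -> R) : R := sup (buying_prices D f).

Definition Dge0 (D : set (X -> R)) (f : X -> R) : Prop := D f \/ G_ge0 f.

Lemma coherent_cone_Eext (A D : set (X -> R)) :
  coherent_D D -> A `<=` D -> coherent_cone (Eext A).
Proof.
move=> [_ [Dgt0 [DZ [DD Dle0]]]] AD.
have EAD : Eext A `<=` D by apply: posi_min => // g [/AD|/Dgt0].
split; first by move=> f f_gt0; apply: posi_in; right.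
split; first by move=> f lam; apply: posiZ.
split; first by move=> f g; apply: posiD.
by move=> f f_le0 /EAD; apply: Dle0.
Qed.

Lemma gamble_Eext (A : set (X -> R)) : A `<=` @gamble R X -> Eext A `<=` @gamble R X.
Proof.
move=> A_gamble; apply: posi_min => [f g|f lam gf _|f [/A_gamble|[]]] //.
- exact: gambleD.
- by apply: gambleM => //; apply: gamble_cst.
Qed.

Hypothesis hX : [set: X] !=set0.
Variable D : set (X -> R).
Hypothesis hD : coherent_cone D.

Lemma cone_gt0 f : G_gt0 f -> D f.
Proof. by case: hD => + _; apply. Qed.

Lemma coneZ f lam : D f -> 0 < lam -> D (fun x => lam * f x).
Proof. by case: hD => _ [+ _]; apply. Qed.

Lemma coneD f g : D f -> D g -> D (fun x => f x + g x).
Proof. by case: hD => _ [_ [+ _]]; apply. Qed.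

Lemma cone_le0 f : (forall x, f x <= 0) -> ~ D f.
Proof. by case: hD => _ [_ [_ +]]; apply. Qed.

Lemma coneD_ge0 f g : D f -> G_ge0 g -> D (fun x => f x + g x).
Proof.
move=> Df [gg g_ge0]; have [[x gx_neq0]|g_eq0] := pselect (exists x, g x != 0).
  by apply: coneD => //; apply: cone_gt0; split => //; split => //; exists x.
suff -> : g = (fun=> 0) by under eq_fun do rewrite addr0.
by apply: funext => x; apply/eqP/negPn/negP => gx_neq0; apply: g_eq0; exists x.
Qed.

Lemma Dge0D f g : Dge0 D f -> Dge0 D g -> Dge0 D (fun x => f x + g x).
Proof.
move=> [Df|[gf f_ge0]] [Dg|[gg g_ge0]].
- by left; apply: coneD.
- by left; apply: coneD_ge0.
- by left; under eq_fun do rewrite addrC; apply: coneD_ge0.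
- by right; split; [apply: gambleD | move=> x; apply: addr_ge0].
Qed.

Lemma Dge0Z f lam : Dge0 D f -> 0 <= lam -> Dge0 D (fun x => lam * f x).
Proof.
move=> Df; rewrite le_eqVlt => /predU1P[<-|lam_gt0].
  by right; under eq_fun do rewrite mul0r; split; [apply: gamble_cst | move=> x].
case: Df => [Df|[gf f_ge0]]; first by left; apply: coneZ.
right; split; first by apply: gambleM => //; apply: gamble_cst.
by move=> x; apply: mulr_ge0 => //; apply: ltW.
Qed.

Lemma Dge0_sum n (F : nat -> X -> R) :
  (forall i, (i < n)%N -> Dge0 D (F i)) -> Dge0 D (fun x => \sum_(i < n) F i x).
Proof.
elim: n => [|n IH] DF.
  by right; under eq_fun do rewrite big_ord0; split; [apply: gamble_cst | move=> x].
under eq_fun do rewrite big_ord_recr /=.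
by apply: Dge0D; [apply: IH => i /ltnW; apply: DF | apply: DF].
Qed.

Lemma buying_pricesW f v v' : buying_prices D f v -> v' <= v -> buying_prices D f v'.
Proof.
rewrite /buying_prices /= => Dv v'v.
have -> : (fun x => f x - v') = (fun x => (f x - v) + (v - v')).
  by apply: funext => x; rewrite addrA subrK.
by apply: coneD_ge0 => //; split; [apply: gamble_cst | move=> x; rewrite subr_ge0].
Qed.

Lemma buying_prices_lt f k v : gamble f -> (forall x, k <= f x) -> v < k ->
  buying_prices D f v.
Proof.
move=> gf kf vk; apply: cone_gt0; apply: (G_gt0_lb hX (k := k - v)).
- by apply: gambleB => //; apply: gamble_cst.
- by rewrite subr_gt0.
- by move=> x; rewrite lerD2r.
Qed.

Lemma buying_prices_ub f k v : (forall x, f x <= k) -> buying_prices D f v -> v <= k.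
Proof.
move=> fk Dv; rewrite leNgt; apply/negP => kv; apply: (cone_le0 _ Dv) => x.
by rewrite subr_le0 (le_trans (fk x)) // ltW.
Qed.

Lemma has_sup_buying_prices f : gamble f -> has_sup (buying_prices D f).
Proof.
move=> gf; have [M _ fM] := gamble_bound hX gf.
have [lo hi] : (forall x, - M <= f x) /\ (forall x, f x <= M).
  by split=> x; have := fM x; rewrite ler_norml => /andP[].
split; first by exists (- M - 1); apply: (buying_prices_lt gf lo); lra.
by exists M => v; apply: buying_prices_ub.
Qed.

Lemma lpr_ge f v : gamble f -> buying_prices D f v -> v <= lpr D f.
Proof. by move=> gf Dv; apply: ub_le_sup => //; case: (has_sup_buying_prices gf). Qed.

Lemma lpr_gt f v : gamble f -> v < lpr D f -> buying_prices D f v.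
Proof.
move=> gf vL; have [S_neq0 _] := has_sup_buying_prices gf.
by have [w Dw /ltW vw] := sup_gt S_neq0 vL; apply: buying_pricesW Dw vw.
Qed.

Lemma lpr_ge_inf f k : gamble f -> (forall x, k <= f x) -> k <= lpr D f.
Proof.
by move=> gf kf; apply/ler_ltP => v vk; apply: lpr_ge => //; apply: buying_prices_lt kf vk.
Qed.

Lemma lpr_le_sup f k : gamble f -> (forall x, f x <= k) -> lpr D f <= k.
Proof.
move=> gf fk; have [S_neq0 _] := has_sup_buying_prices gf.
by apply: ge_sup => // v; apply: buying_prices_ub.
Qed.

Lemma lpr_cst k : lpr D (fun _ => k) = k.
Proof.
by apply/eqP; rewrite eq_le lpr_le_sup ?lpr_ge_inf //; apply: gamble_cst.
Qed.

Lemma lprD_ge f g : gamble f -> gamble g -> lpr D f + lpr D g <= lpr D (fun x => f x + g x).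
Proof.
move=> gf gg; apply/ler_ltP => v v_lt.
set e := (lpr D f + lpr D g - v) / 2.
have Df : buying_prices D f (lpr D f - e) by apply: lpr_gt => //; rewrite /e; lra.
have Dg : buying_prices D g (lpr D g - e) by apply: lpr_gt => //; rewrite /e; lra.
have -> : v = (lpr D f - e) + (lpr D g - e) by rewrite /e; lra.
apply: lpr_ge; first exact: gambleD.
have:= coneD Df Dg; congr D; apply: funext => x; lra.
Qed.

Lemma lprZ f lam : gamble f -> 0 <= lam -> lpr D (fun x => lam * f x) = lam * lpr D f.
Proof.
move=> gf; rewrite le_eqVlt => /predU1P[<-|lam_gt0].
  by under eq_fun do rewrite mul0r; rewrite lpr_cst mul0r.
have lprZ_ge f' a : gamble f' -> 0 < a -> a * lpr D f' <= lpr D (fun x => a * f' x).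
  move=> gf' a_gt0; apply/ler_ltP => v v_lt.
  have Df' : buying_prices D f' (v / a) by apply: lpr_gt => //; rewrite ltr_pdivrMr // mulrC.
  have -> : v = a * (v / a) by rewrite mulrC divfK // gt_eqF.
  apply: lpr_ge; first by apply: gambleM => //; apply: gamble_cst.
  by have := coneZ Df' a_gt0; congr D; apply: funext => x; rewrite mulrBr.
apply/eqP; rewrite eq_le lprZ_ge // andbT.
have := lprZ_ge _ lam^-1 (gambleM (gamble_cst _ lam) gf); rewrite invr_gt0 => /(_ lam_gt0).
have -> : (fun x => lam^-1 * (lam * f x)) = f.
  by apply: funext => x; rewrite mulrA mulVf ?mul1r // gt_eqF.
by rewrite ler_pdivrMl // mulrC.
Qed.

Lemma lprDc f k : gamble f -> lpr D (fun x => f x + k) = lpr D f + k.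
Proof.
move=> gf; have gfk : gamble (fun x => f x + k) by apply: gambleD => //; apply: gamble_cst.
have shift v : buying_prices D (fun x => f x + k) v = buying_prices D f (v - k).
  by rewrite /buying_prices /=; congr D; apply: funext => x; lra.
apply/eqP; rewrite eq_le; apply/andP; split.
  have [S_neq0 _] := has_sup_buying_prices gfk.
  by apply: ge_sup => // v; rewrite shift => /(lpr_ge gf); lra.
by apply/ler_ltP => v v_lt; apply: lpr_ge => //; rewrite shift; apply: lpr_gt => //; lra.
Qed.

Lemma lprDN_le0 f : gamble f -> lpr D f + lpr D (fun x => - f x) <= 0.
Proof.
move=> gf; apply: le_trans (lprD_ge gf (gambleN gf)) _.
by under eq_fun do rewrite subrr; rewrite lpr_cst.
Qed.

Lemma lpr_ge0 f : gamble f -> Dge0 D f -> 0 <= lpr D f.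
Proof.
move=> gf [Df|[_ f_ge0]]; last exact: lpr_ge_inf.
by apply: lpr_ge => //; rewrite /buying_prices /=; under eq_fun do rewrite subr0.
Qed.

Lemma Dge0_le_lpr f mu : gamble f -> Dge0 D (fun x => f x - mu) -> mu <= lpr D f.
Proof.
move=> gf /(lpr_ge0 (gambleB gf (gamble_cst _ mu))).
by rewrite lprDc // subr_ge0.
Qed.

Lemma lprMr f c : gamble f -> 0 <= c -> lpr D (fun x => f x * c) = lpr D f * c.
Proof. by move=> gf c_ge0; under eq_fun do rewrite mulrC; rewrite lprZ // mulrC. Qed.

Lemma lprMr_le0 f c : gamble f -> c <= 0 ->
  lpr D (fun x => f x * c) = - lpr D (fun x => - f x) * c.
Proof.
move=> gf c_le0; under eq_fun do rewrite -mulrNN.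
by rewrite lprMr ?oppr_ge0 //; [rewrite mulrN mulNr | apply: gambleN].
Qed.

Lemma P_of_setT f : gamble f -> P_of D f setT = (lpr D f)%:E.
Proof.
move=> gf; apply: ereal_sup_EFin_eq => mu /=; rewrite cond_gamble_setT.
  exact: lpr_ge.
exact: lpr_gt.
Qed.

End CoherentCone.

Section DominatedExtension.
Variables (R : realType) (X : Type).
Hypothesis hX : [set: X] !=set0.
Variable D : set (X -> R).
Hypothesis hD : coherent_cone D.
Variable vs : nat -> X -> R.
Hypothesis gamble_vs : forall i, gamble (vs i).

Definition lincomb n (t : nat -> R) : X -> R := fun x => \sum_(i < n) t i * vs i x.

Definition linform n (t q : nat -> R) : R := \sum_(i < n) t i * q i.

(* [q] encodes the linear functional [lincomb n t |-> linform n t q] on the span of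
   [vs 0, ..., vs n.-1]; it need not be well defined unless it is dominated. *)
Definition dominated n (q : nat -> R) : Prop :=
  forall t, lpr D (lincomb n t) <= linform n t q.

Lemma gamble_lincomb n t : gamble (lincomb n t).
Proof.
by apply: (gamble_sum (F := fun i x => t i * vs i x)) => i _; apply: gambleM => //;
  apply: gamble_cst.
Qed.

Lemma lincombS n t : lincomb n.+1 t = (fun x => lincomb n t x + t n * vs n x).
Proof. by apply: funext => x; rewrite /lincomb big_ord_recr. Qed.

Lemma lincombD n t t' :
  lincomb n (fun i => t i + t' i) = (fun x => lincomb n t x + lincomb n t' x).
Proof.
by apply: funext => x; rewrite /lincomb -big_split; apply: eq_bigr => i _; rewrite mulrDl.
Qed.

Lemma lincombZ n r t : lincomb n (fun i => r * t i) = (fun x => r * lincomb n t x).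
Proof. by apply: funext => x; rewrite /lincomb mulr_sumr; apply: eq_bigr => i _; rewrite mulrA. Qed.

Lemma linformD n t t' q : linform n (fun i => t i + t' i) q = linform n t q + linform n t' q.
Proof. by rewrite /linform -big_split; apply: eq_bigr => i _; rewrite mulrDl. Qed.

Lemma linformZ n r t q : linform n (fun i => r * t i) q = r * linform n t q.
Proof. by rewrite /linform mulr_sumr; apply: eq_bigr => i _; rewrite mulrA. Qed.

Lemma linformS_set n t q qn :
  linform n.+1 t (fun i => if i == n then qn else q i) = linform n t q + t n * qn.
Proof.
rewrite /linform big_ord_recr /= eqxx; congr (_ + _).
by apply: eq_bigr => i _; rewrite ltn_eqF.
Qed.

Lemma sum_delta n j (a : nat -> R) : (j < n)%N ->
  \sum_(i < n) ((i : nat) == j)%:R * a i = a j.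
Proof.
move=> jn; rewrite (bigD1 (Ordinal jn)) //= eqxx mul1r big1 ?addr0 // => i ij.
suff /negbTE -> : (i : nat) != j by rewrite mul0r.
by apply: contra ij => /eqP ij; apply/eqP/val_inj.
Qed.

Lemma dominated_le n q j : dominated n q -> (j < n)%N -> lpr D (vs j) <= q j.
Proof.
move=> domq jn; have := domq (fun i => ((i : nat) == j)%:R).
rewrite /linform /= sum_delta //; congr (lpr D _ <= _).
by apply: funext => x; rewrite /lincomb /= (sum_delta (fun i => vs i x)).
Qed.

Lemma dominated_ge0 n q t : dominated n q -> Dge0 D (lincomb n t) -> 0 <= linform n t q.
Proof. by move=> domq /(lpr_ge0 hX hD (gamble_lincomb n t))/le_trans; apply. Qed.

(* Finite-dimensional Hahn-Banach step: superadditivity of [lpr D] puts every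
   [lpr D (lincomb n t + vs n) - linform n t q] below every
   [linform n t' q - lpr D (lincomb n t' - vs n)], and any value in between extends [q]. *)
Lemma dominated_extend n q : dominated n q ->
  exists qn, dominated n.+1 (fun i => if i == n then qn else q i).
Proof.
move=> domq; have gv := gamble_vs n.
pose U := [set lpr D (fun x => lincomb n t x + vs n x) - linform n t q | t in [set: nat -> R]].
have U_le t t' : lpr D (fun x => lincomb n t x + vs n x) - linform n t q <=
                 linform n t' q - lpr D (fun x => lincomb n t' x - vs n x).
  have := lprD_ge hX hD (gambleD (gamble_lincomb n t) gv) (gambleB (gamble_lincomb n t') gv).
  have -> : (fun x => lincomb n t x + vs n x + (lincomb n t' x - vs n x)) =
            lincomb n (fun i => t i + t' i) by rewrite lincombD; apply: funext => x; lra.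
  by have := domq (fun i => t i + t' i); rewrite linformD; lra.
have U_neq0 : U !=set0 by exists (lpr D (fun x => lincomb n 0 x + vs n x) - linform n 0 q), 0.
have supU : has_sup U.
  split=> //; exists (linform n 0 q - lpr D (fun x => lincomb n 0 x - vs n x)).
  by move=> _ [s _ <-]; apply: U_le.
exists (sup U) => t; rewrite lincombS linformS_set.
have [tn0|tn_neq0] := eqVneq (t n) 0.
  by rewrite tn0 mul0r addr0; under eq_fun do rewrite mul0r addr0; apply: domq.
pose r := `|t n|; have r_gt0 : 0 < r by rewrite normr_gt0.
pose t' i := t i / r.
have -> : t = (fun i => r * t' i) by apply: funext => i; rewrite /t' mulrC divfK ?gt_eqF.
rewrite lincombZ linformZ /=; under eq_fun do rewrite -mulrA -mulrDr.
have gt' := gambleD (gamble_lincomb n t') (gambleM (gamble_cst _ (t' n)) gv).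
rewrite (lprZ hX hD gt' (ltW r_gt0)).
rewrite -mulrA -mulrDr ler_pM2l //.
have [tn_gt0|tn_lt0] := ltP 0 (t n).
- have -> : t' n = 1 by rewrite /t' /r gtr0_norm // divff.
  rewrite mul1r; under eq_fun do rewrite mul1r.
  have : U (lpr D (fun x => lincomb n t' x + vs n x) - linform n t' q) by exists t'.
  by move/(sup_upper_bound supU); lra.
- have -> : t' n = -1 by rewrite /t' /r ltr0_norm ?lt_neqAle ?tn_neq0 // invrN mulrN divff.
  rewrite mulN1r; under eq_fun do rewrite mulN1r.
  have : sup U <= linform n t' q - lpr D (fun x => lincomb n t' x - vs n x).
    by apply: ge_sup => // _ [s _ <-]; apply: U_le.
  lra.
Qed.

Lemma dominated_base : vs 0 = (fun=> 1) ->
  dominated 2 (fun i => if i == 0%N then 1 else lpr D (vs 1)).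
Proof.
move=> vs0 t; have gv1 := gamble_vs 1.
have -> : lincomb 2 t = (fun x => t 1%N * vs 1%N x + t 0%N).
  by apply: funext => x; rewrite /lincomb !big_ord_recr big_ord0 /= vs0; lra.
rewrite /linform !big_ord_recr big_ord0 /=.
rewrite (lprDc hX hD _ (gambleM (gamble_cst _ _) gv1)).
have [t1_ge0|t1_lt0] := leP 0 (t 1%N); first by rewrite (lprZ hX hD gv1 t1_ge0); lra.
under eq_fun do rewrite -mulrNN.
have Nt1_ge0 : 0 <= - t 1%N by rewrite oppr_ge0 ltW.
rewrite (lprZ hX hD (gambleN gv1) Nt1_ge0).
by have := lprDN_le0 hX hD gv1; nra.
Qed.

Lemma dominated_exists k : vs 0 = (fun=> 1) ->
  exists q, [/\ q 0%N = 1, q 1%N = lpr D (vs 1) & dominated k.+2 q].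
Proof.
move=> vs0; elim: k => [|k [q [q0 q1 domq]]].
  by exists (fun i => if i == 0%N then 1 else lpr D (vs 1)); split => //; apply: dominated_base.
have [qn domqn] := dominated_extend domq.
by exists (fun i => if i == k.+2 then qn else q i).
Qed.

End DominatedExtension.

Section ProductCone.
Variables (R : realType) (X1 X2 : Type).
Variables (B1 : set (set X1)) (B2 : set (set X2)).
Variables (D1 : set (X1 -> R)) (D2 : set (X2 -> R)).

Definition prod_gen : set (X1 * X2 -> R) :=
  ([set g | exists f2 b1, D2 f2 /\ (B1 `|` [set setT]) b1 /\
            g = (fun x => f2 x.2 * \1_b1 x.1)] `|`
   [set g | exists f1 b2, D1 f1 /\ (B2 `|` [set setT]) b2 /\
            g = (fun x => f1 x.1 * \1_b2 x.2)]) `|` @G_gt0 R (X1 * X2).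

Lemma prod_gen2 f2 b1 : D2 f2 -> (B1 `|` [set setT]) b1 ->
  prod_gen (fun x => f2 x.2 * \1_b1 x.1).
Proof. by move=> Df2 b1B; left; left; exists f2, b1. Qed.

Lemma prod_gen1 f1 b2 : D1 f1 -> (B2 `|` [set setT]) b2 ->
  prod_gen (fun x => f1 x.1 * \1_b2 x.2).
Proof. by move=> Df1 b2B; left; right; exists f1, b2. Qed.

Lemma Dprod_add_simple_mul F s f2 : D_prod B1 B2 D1 D2 F -> simple_meas B1 s -> D2 f2 ->
  D_prod B1 B2 D1 D2 (fun x => F x + s x.1 * f2 x.2).
Proof.
move=> DF [n [c0 [cs [Bs [c0_ge0 [cs_ge0 [BBs ->]]]]]]] Df2.
have -> : (fun x => F x + (c0 + \sum_(k < n) cs k * \1_(Bs k) x.1) * f2 x.2) =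
  (fun x => (F x + c0 * (f2 x.2 * \1_setT x.1)) + \sum_(k < n) cs k * (f2 x.2 * \1_(Bs k) x.1)).
  apply: funext => x; rewrite indicE in_setT mulr1 mulrDl mulr_suml -addrA; congr (_ + (_ + _)).
  by apply: eq_bigr => k _; rewrite mulrAC mulrA.
apply: posiD_sum => // [|k]; last by apply: prod_gen2 => //; left.
by apply: posiD_ge0 => //; apply: prod_gen2 => //; right.
Qed.

Hypothesis hD1 : coherent_cone D1.
Hypothesis hD2 : coherent_cone D2.

Definition sectionwise (F : X1 * X2 -> R) : Prop :=
  exists l : seq ((X1 -> R) * set X2),
    (forall j, (j < size l)%N -> D1 (nth (fun=> 0, set0) l j).1) /\
    forall x1, Dge0 D2 (fun x2 => F (x1, x2) - \sum_(p <- l) p.1 x1 * \1_(p.2) x2).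

Lemma sectionwiseD F G : sectionwise F -> sectionwise G -> sectionwise (fun x => F x + G x).
Proof.
move=> [l [Dl secF]] [l' [Dl' secG]]; exists (l ++ l'); split.
  move=> j; rewrite size_cat nth_cat; have [jl _|jl jll'] := ltnP j (size l); first exact: Dl.
  by apply: Dl'; rewrite ltn_subLR.
move=> x1; have := Dge0D hD2 (secF x1) (secG x1); congr Dge0.
by apply: funext => x2; rewrite big_cat /=; lra.
Qed.

Lemma sectionwiseZ F lam : sectionwise F -> 0 < lam -> sectionwise (fun x => lam * F x).
Proof.
move=> [l [Dl secF]] lam_gt0; exists [seq (fun x => lam * p.1 x, p.2) | p <- l]; split.
  move=> j; rewrite size_map => jl; rewrite (nth_map (fun=> 0, set0)) //=.
  exact/(coneZ hD1)/lam_gt0/Dl.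
move=> x1; have := Dge0Z hD2 (secF x1) (ltW lam_gt0); congr Dge0.
apply: funext => x2; rewrite big_map /= mulrBr mulr_sumr; congr (_ - _).
by apply: eq_bigr => p _; rewrite mulrA.
Qed.

Lemma prod_gen_sectionwise : prod_gen `<=` sectionwise.
Proof.
have Dge0_0 : Dge0 D2 (fun=> 0) by right; split; [apply: gamble_cst | move=> x].
move=> F [[[f2 [b1 [Df2 [_ ->]]]]|[f1 [b2 [Df1 [_ ->]]]]]|[gF [F_ge0 _]]].
- exists [::]; split=> // x1; under eq_fun do rewrite big_nil subr0 /=.
  rewrite indicE; case: (x1 \in b1); last by under eq_fun do rewrite mulr0.
  by left; under eq_fun do rewrite mulr1.
- exists [:: (f1, b2)]; split=> [[]|x1] //.
  by under eq_fun do rewrite big_seq1 subrr.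
- exists [::]; split=> // x1; right; under eq_fun do rewrite big_nil subr0.
  by split=> [|x2]; [apply: (gamble_comp (fun x2 => (x1, x2)) gF) | apply: F_ge0].
Qed.

Lemma Dprod_sectionwise F : D_prod B1 B2 D1 D2 F -> sectionwise F.
Proof.
by apply: posi_min; [apply: sectionwiseD | apply: sectionwiseZ | apply: prod_gen_sectionwise].
Qed.

End ProductCone.

Section ProductSwap.
Variables (R : realType) (X1 X2 : Type).
Variables (B1 : set (set X1)) (B2 : set (set X2)).
Variables (D1 : set (X1 -> R)) (D2 : set (X2 -> R)).

Lemma Dprod_swap F : D_prod B1 B2 D1 D2 F -> D_prod B2 B1 D2 D1 (fun y => F (y.2, y.1)).
Proof.
move: F; apply: posi_min => [F G|F lam|F].
- exact: posiD.
- exact: posiZ.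
move=> [[[f2 [b1 [Df2 [b1B ->]]]]|[f1 [b2 [Df1 [b2B ->]]]]]|[gF [F_ge0 [x Fx]]]].
- exact: posi_in (prod_gen1 B2 D1 Df2 b1B).
- exact: posi_in (prod_gen2 B1 D2 Df1 b2B).
apply: posi_in; right; split; first exact: (gamble_comp (fun y : X2 * X1 => (y.2, y.1)) gF).
by split=> [y|]; [apply: F_ge0 | exists (x.2, x.1); case: x Fx].
Qed.

End ProductSwap.

Section ProductLowerPrevision.
Variables (R : realType) (X1 X2 : Type).
Hypothesis hX1 : [set: X1] !=set0.
Hypothesis hX2 : [set: X2] !=set0.
Variables (B1 : set (set X1)) (B2 : set (set X2)).
Variables (D1 : set (X1 -> R)) (D2 : set (X2 -> R)).
Hypothesis hD1 : coherent_cone D1.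
Hypothesis hD2 : coherent_cone D2.
Hypothesis gamble_D1 : D1 `<=` @gamble R X1.

Lemma Dprod_mul_ub h g mu : gamble h -> gamble g ->
  D_prod B1 B2 D1 D2 (fun x => g x.1 * h x.2 - mu) ->
  mu <= lpr D1 (fun x1 => g x1 * lpr D2 h).
Proof.
move=> gh gg /(Dprod_sectionwise hD1 hD2) [l [Dl secl]].
pose d : (X1 -> R) * set X2 := (fun=> 0, set0).
pose vs i : X2 -> R := if i is k.+2 then \1_(nth d l k).2 else if i is 1%N then h else fun=> 1.
have gvs i : gamble (vs i).
  by case: i => [|[|k]] /=; [apply: gamble_cst | exact: gh | apply: gamble_indic].
have [q [q0 q1 domq]] := dominated_exists hX2 hD2 gvs (size l) erefl.
set c := lpr D2 h in q1 *.
pose Rf x1 := \sum_(j < size l) q j.+2 * (nth d l j).1 x1.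
have Rf_le x1 : Rf x1 <= g x1 * c - mu.
  pose t i := if i is k.+2 then - (nth d l k).1 x1 else if i is 1%N then g x1 else - mu.
  have sec_eq : lincomb vs (size l).+2 t =
      (fun x2 => g x1 * h x2 - mu - \sum_(p <- l) p.1 x1 * \1_(p.2) x2).
    apply: funext => x2; rewrite /lincomb !big_ord_recl /= (big_nth d) big_mkord -sumrN.
    by under [in RHS]eq_bigr do rewrite -mulNr; lra.
  have := dominated_ge0 hX2 hD2 gvs domq (t := t); rewrite sec_eq => /(_ (secl x1)).
  rewrite /linform !big_ord_recl /= q0 q1.
  rewrite (eq_bigr (fun j : 'I_(size l) => - (q j.+2 * (nth d l j).1 x1))) ?sumrN /Rf; first lra.
  by move=> j _; rewrite mulNr mulrC.
have DRf : Dge0 D1 Rf.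
  apply: (Dge0_sum hD1 (F := fun j x => q j.+2 * (nth d l j).1 x)) => j jl.
  apply: (Dge0Z hD1); first by left; apply: Dl.
  apply: le_trans (dominated_le domq _); last by rewrite ltnS.
  by apply: (lpr_ge_inf hX2 hD2 (gvs _)) => x; apply: indic_ge0.
have gRf : gamble Rf.
  apply: (gamble_sum (F := fun j x => q j.+2 * (nth d l j).1 x)) => j jl.
  by apply: gambleM; [apply: gamble_cst | apply/gamble_D1/Dl].
apply: (Dge0_le_lpr hX1 hD1 (gambleM gg (gamble_cst _ c))).
have -> : (fun x1 => g x1 * c - mu) = (fun x1 => Rf x1 + (g x1 * c - mu - Rf x1)).
  by apply: funext => x1; lra.
apply: (Dge0D hD1 DRf); right; split; last by move=> x1; have := Rf_le x1; lra.
by apply: gambleB => //; apply: gambleB; [apply: gambleM gg (gamble_cst _ c) | apply: gamble_cst].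
Qed.

Lemma Dprod_mul_lb h g mu : gamble h -> B_measurable B1 g ->
  mu < lpr D1 (fun x1 => g x1 * lpr D2 h) ->
  D_prod B1 B2 D1 D2 (fun x => g x.1 * h x.2 - mu).
Proof.
move=> gh [[gg _] [gs [gs_simple gs_cvg]]] mu_lt.
set c := lpr D2 h in mu_lt *.
have ggc : gamble (fun x1 => g x1 * c) by apply: gambleM gg (gamble_cst _ c).
pose mu' := (mu + lpr D1 (fun x1 => g x1 * c)) / 2.
pose d := mu' - mu; have d3_gt0 : 0 < d / 3 by rewrite /d /mu'; lra.
have Dgc : D1 (fun x1 => g x1 * c - mu') by apply: (lpr_gt hX1 hD1 ggc); rewrite /mu'; lra.
have [Mg Mg_ge0 gMg] := gamble_bound hX1 gg.
have [eps eps_gt0 eps_small] := ex_mul_tolerance Mg_ge0 d3_gt0.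
have eps_norm : `|eps| <= eps by rewrite gtr0_norm.
pose f2 x2 := h x2 - (c - eps).
have Df2 : D2 f2 by apply: (lpr_gt hX2 hD2 gh); rewrite /c; lra.
have gf2 : gamble f2 by apply: gambleB gh (gamble_cst _ _).
have [Mf Mf_ge0 f2Mf] := gamble_bound hX2 gf2.
have [del del_gt0 del_small] := ex_mul_tolerance Mf_ge0 d3_gt0.
have [N gsN] := gs_cvg del del_gt0.
have [sN [ggN _]] := gs_simple N.
(* The slack of the decomposition below; the tolerances make it at least [d / 3]. *)
pose P x := (g x.1 - gs N x.1) * f2 x.2 + (d - eps * g x.1).
have DP : D_prod B1 B2 D1 D2 P.
  have hX : [set: X1 * X2] !=set0 by case: hX1 => x1 _; case: hX2 => x2 _; exists (x1, x2).
  have gP : gamble P.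
    apply: gambleD.
      exact: gambleM (gamble_comp _ (gambleB gg ggN)) (gamble_comp _ gf2).
    exact: gambleB (gamble_cst _ _) (gambleM (gamble_cst _ _) (gamble_comp _ gg)).
  apply: posi_in; right; apply: (G_gt0_lb hX gP d3_gt0) => -[x1 x2].
  have := del_small _ _ (f2Mf x2) (gsN N (leqnn N) x1); rewrite ler_norml => /andP[+ _].
  have := eps_small _ _ (gMg x1) eps_norm; rewrite ler_norml => /andP[_ +].
  rewrite /P /=; lra.
have -> : (fun x => g x.1 * h x.2 - mu) =
    (fun x => ((g x.1 * c - mu') * \1_setT x.2 + P x) + gs N x.1 * f2 x.2).
  by apply: funext => x; rewrite indicE in_setT mulr1 /P /f2 /d; ring.
apply: Dprod_add_simple_mul => //; apply: posiD DP.
exact: posi_in (prod_gen1 B1 D2 Dgc (or_intror erefl)).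
Qed.

Lemma P_of_Dprod_mul h g : gamble h -> B_measurable B1 g ->
  P_of (D_prod B1 B2 D1 D2) (fun x => g x.1 * h x.2) setT =
  (lpr D1 (fun x1 => g x1 * lpr D2 h))%:E.
Proof.
move=> gh mg; have gg : gamble g by case: mg => [[]].
by apply: ereal_sup_EFin_eq => mu /=; rewrite cond_gamble_setT;
  [apply: Dprod_mul_ub | apply: Dprod_mul_lb].
Qed.

End ProductLowerPrevision.

Section ProductLowerPrevisionSwap.
Variables (R : realType) (X1 X2 : Type).
Hypothesis hX1 : [set: X1] !=set0.
Hypothesis hX2 : [set: X2] !=set0.
Variables (B1 : set (set X1)) (B2 : set (set X2)).
Variables (D1 : set (X1 -> R)) (D2 : set (X2 -> R)).
Hypothesis hD1 : coherent_cone D1.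
Hypothesis hD2 : coherent_cone D2.
Hypothesis gamble_D2 : D2 `<=` @gamble R X2.

Lemma P_of_Dprod_swap F : P_of (D_prod B1 B2 D1 D2) F setT =
  P_of (D_prod B2 B1 D2 D1) (fun y => F (y.2, y.1)) setT.
Proof.
rewrite /P_of; congr (ereal_sup (EFin @` _)); apply/seteqP; split=> mu /=;
  rewrite !cond_gamble_setT; first exact: Dprod_swap.
move=> /Dprod_swap /=; suff -> : (fun y : X1 * X2 => F (y.1, y.2) - mu) = (fun y => F y - mu) by [].
by apply: funext => -[].
Qed.


Lemma P_of_Dprod_mul_swap h g : gamble h -> B_measurable B2 g ->
  P_of (D_prod B1 B2 D1 D2) (fun x => h x.1 * g x.2) setT =
  (lpr D2 (fun x2 => g x2 * lpr D1 h))%:E.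
Proof.
move=> gh mg; rewrite P_of_Dprod_swap /=.
have -> : (fun y : X2 * X1 => h y.2 * g y.1) = (fun y => g y.1 * h y.2).
  by apply: funext => y; rewrite mulrC.
exact: P_of_Dprod_mul.
Qed.

End ProductLowerPrevisionSwap.

Section NaturalExtension.
Variables (R : realType) (X : Type).
Hypothesis hX : [set: X] !=set0.
Variables (C : set ((X -> R) * set X)) (P : (X -> R) -> set X -> \bar R).
Hypothesis hP : coherent_P C P.

Definition assessment : set (X -> R) := [set g | exists f B (mu : R),
  C (f, B) /\ (mu%:E < P f B)%E /\ g = cond_gamble f B mu].

Lemma assessment_gamble : assessment `<=` @gamble R X.
Proof.
case: hP => CX _ _ [f [B [mu [Cf [_ ->]]]]]; have [gf _] := CX _ Cf.
by apply: gambleM; [apply: gambleB gf (gamble_cst _ _) | apply: gamble_indic].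
Qed.

Lemma assessment_desirable : exists2 D, coherent_D D & assessment `<=` D.
Proof.
case: hP => CX [D [cohD PD]]; exists D => // _ [f [B [mu [Cf [mu_lt ->]]]]].
have [_ [Dgt0 [_ [DD _]]]] := cohD.
rewrite PD // in mu_lt; have [_ [mu' Dmu' <-]] := ereal_sup_gt mu_lt.
rewrite lte_fin => mu_lt_mu'; have [_ /set0P[b Bb]] := CX _ Cf.
have -> : cond_gamble f B mu = (fun x => cond_gamble f B mu' x + (mu' - mu) * \1_B x).
  by apply: funext => x; rewrite /cond_gamble; ring.
apply: DD Dmu' _; apply: Dgt0; split.
  by apply: gambleM; [apply: gamble_cst | apply: gamble_indic].
split; first by move=> x; rewrite mulr_ge0 ?indic_ge0 // subr_ge0 ltW.
by exists b; rewrite indicE mem_set // mulr1 subr_eq0 gt_eqF.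
Qed.

Lemma E_of_P_cone : coherent_cone (E_of_P C P).
Proof. by have [D cohD AD] := assessment_desirable; apply: coherent_cone_Eext cohD AD. Qed.

Lemma E_of_P_gamble : E_of_P C P `<=` @gamble R X.
Proof. exact/gamble_Eext/assessment_gamble. Qed.

Lemma nat_ext_u_lpr f : gamble f -> nat_ext_u C P f = (lpr (E_of_P C P) f)%:E.
Proof. by move=> gf; rewrite /nat_ext_u /nat_ext (P_of_setT hX E_of_P_cone gf). Qed.

Lemma nat_ext_upper_lpr f : gamble f ->
  nat_ext_upper C P f = (- lpr (E_of_P C P) (fun x => - f x))%:E.
Proof. by move=> gf; rewrite /nat_ext_upper nat_ext_u_lpr //; apply: gambleN. Qed.

Lemma nat_ext_Mr (v e : \bar R) g c : gamble g -> e = c%:E ->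
  v = (lpr (E_of_P C P) (fun x => g x * c))%:E ->
  v = nat_ext_u C P (fun x => g x * fine e) /\
  ((0 <= e)%E -> v = (nat_ext_u C P g * e)%E) /\
  ((e <= 0)%E -> v = (nat_ext_upper C P g * e)%E).
Proof.
move=> gg -> ->; rewrite /= nat_ext_u_lpr; last by apply: gambleM gg (gamble_cst _ c).
split=> //; split; rewrite lee_fin => c_sgn.
  by rewrite nat_ext_u_lpr // (lprMr hX E_of_P_cone gg c_sgn).
by rewrite nat_ext_upper_lpr // (lprMr_le0 hX E_of_P_cone gg c_sgn).
Qed.

End NaturalExtension.

Theorem corollary22 (R : realType) (X1 X2 : Type)
  (hX1 : [set: X1] !=set0) (hX2 : [set: X2] !=set0)
  (B1 : set (set X1)) (B2 : set (set X2))
  (hB1 : forall b, B1 b -> b != set0) (hB2 : forall b, B2 b -> b != set0)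
  (C1 : set ((X1 -> R) * set X1)) (P1 : (X1 -> R) -> set X1 -> \bar R)
  (C2 : set ((X2 -> R) * set X2)) (P2 : (X2 -> R) -> set X2 -> \bar R)
  (hP1 : coherent_P C1 P1) (hP2 : coherent_P C2 P2) :
  (* case i = 1, j = 2 *)
  (forall (h : X2 -> R) (g : X1 -> R), gamble h -> B_measurable B1 g ->
    let Ejh := nat_ext_u C2 P2 h in
    let lhs := prod_P B1 B2 C1 P1 C2 P2 (fun x => g x.1 * h x.2) setT in
    lhs = nat_ext_u C1 P1 (fun x => g x * fine Ejh) /\
    ((0 <= Ejh)%E -> lhs = (nat_ext_u C1 P1 g * Ejh)%E) /\
    ((Ejh <= 0)%E -> lhs = (nat_ext_upper C1 P1 g * Ejh)%E)) /\
  (* case i = 2, j = 1 *)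
  (forall (h : X1 -> R) (g : X2 -> R), gamble h -> B_measurable B2 g ->
    let Ejh := nat_ext_u C1 P1 h in
    let lhs := prod_P B1 B2 C1 P1 C2 P2 (fun x => h x.1 * g x.2) setT in
    lhs = nat_ext_u C2 P2 (fun x => g x * fine Ejh) /\
    ((0 <= Ejh)%E -> lhs = (nat_ext_u C2 P2 g * Ejh)%E) /\
    ((Ejh <= 0)%E -> lhs = (nat_ext_upper C2 P2 g * Ejh)%E)).
Proof.
have cone1 := E_of_P_cone hP1; have cone2 := E_of_P_cone hP2.
have gamble1 := E_of_P_gamble hP1; have gamble2 := E_of_P_gamble hP2.
split=> h g gh mg Ejh lhs; have gg : gamble g by case: mg => [[]].
- apply: (nat_ext_Mr hX1 hP1 gg (nat_ext_u_lpr hX2 hP2 gh)).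
  exact: P_of_Dprod_mul.
- apply: (nat_ext_Mr hX2 hP2 gg (nat_ext_u_lpr hX1 hP1 gh)).
  exact: P_of_Dprod_mul_swap.
Qed.
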